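(* Let $R$ be a commutative ring and $n$ a positive integer. Then the formal power series ring $R[[x]]$ is $n$-strongly clean if and only if $R$ is $n$-strongly clean.
   Context: All rings are associative with identity. For a positive integer $n$, an element $x \in R$ is $n$-strongly clean if $x = e + u_1 + \cdots + u_n$ where $e^2=e$, $u_1,\dots,u_n$ are units of $R$, and $eu_i = u_i e$ for all $i$; $R$ is $n$-strongly clean if every element of $R$ is $n$-strongly clean. *)

From HB Require Import structures.
From mathcomp Require Import all_boot all_order all_algebra.
Set Implicit Arguments. Unset Strict Implicit. Unset Printing Implicit Defensive.
Import GRing.Theory.
Local Open Scope ring_scope.

Definition is_unit_op (T : Type) (mul : T -> T -> T) (one : T) (u : T) : Prop :=
  exists v, mul u v = one /\ mul v u = one.

Definition nsc_elt_op (T : Type) (add mul : T -> T -> T) (zero one : T)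
    (n : nat) (x : T) : Prop :=
  exists (e : T) (u : 'I_n -> T),
    [/\ mul e e = e,
        (forall i, is_unit_op mul one (u i)),
        (forall i, mul e (u i) = mul (u i) e) &
        x = add e (\big[add/zero]_(i < n) u i)].

Definition nsc_ring_op (T : Type) (add mul : T -> T -> T) (zero one : T)
    (n : nat) : Prop :=
  forall x : T, nsc_elt_op add mul zero one n x.

Definition n_strongly_clean (R : pzRingType) (n : nat) : Prop :=
  nsc_ring_op (@GRing.add R) (@GRing.mul R) 0 1 n.

Definition fps (R : Type) := nat -> R.

Definition fps_add (R : pzRingType) (f g : fps R) : fps R := fun k => f k + g k.
Definition fps_mul (R : pzRingType) (f g : fps R) : fps R :=
  fun k => \sum_(i < k.+1) f i * g (k - i)%N.
Definition fps_zero (R : pzRingType) : fps R := fun _ => 0.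
Definition fps_one (R : pzRingType) : fps R := fun k => (k == 0%N)%:R.

Definition fps_n_strongly_clean (R : pzRingType) (n : nat) : Prop :=
  nsc_ring_op (@fps_add R) (@fps_mul R) (fps_zero R) (fps_one R) n.

From mathcomp Require Import all_boot all_order all_algebra.
From Stdlib Require Import FunctionalExtensionality.
From mathcomp Require Import zify.
Set Implicit Arguments. Unset Strict Implicit. Unset Printing Implicit Defensive.
Import GRing.Theory.
Local Open Scope ring_scope.

(* The constant-term map R[[x]] -> R, f |-> f_0, is a surjective unital ring
   morphism with section a |-> a (constant series).  Hence:
   - (R[[x]] => R)  a homomorphic image of an n-strongly clean ring is
     n-strongly clean (nsc_ring_op_image), applied to this morphism;
   - (R => R[[x]])  decompose f_0 = e + u_1 + ... + u_n in R and take the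
     constant idempotent e, the constant units u_i, except that the
     non-constant part of f is added to one chosen u_i0.  Each of these
     series is a unit because a power series whose constant term is a unit
     is itself a unit (fps_unit_of_coef0_unit), and everything commutes
     since R, hence R[[x]], is commutative (fps_nsc_lift).
   The inverse of a series is built coefficient by coefficient from the
   usual recursion g_(m+1) = - b * sum_(i <= m) f_(i+1) g_(m-i), b = f_0^-1. *)

Lemma nsc_ring_op_image (T S : Type) (addT mulT : T -> T -> T) (zT oT : T)
    (addS mulS : S -> S -> S) (zS oS : S) (phi : T -> S) (sec : S -> T)
    (n : nat) :
  {morph phi : x y / addT x y >-> addS x y} ->
  {morph phi : x y / mulT x y >-> mulS x y} ->
  phi zT = zS -> phi oT = oS -> cancel sec phi ->
  nsc_ring_op addT mulT zT oT n -> nsc_ring_op addS mulS zS oS n.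
Proof.
move=> phiD phiM phi0 phi1 secK cleanT y.
rewrite -(secK y); have [e [u [ee uU eu ->]]] := cleanT (sec y).
exists (phi e), (phi \o u); split => [||i|].
- by rewrite -phiM ee.
- move=> i; have [v [uv vu]] := uU i.
  by exists (phi v); rewrite -!phiM uv vu phi1.
- by rewrite /= -!phiM eu.
- by rewrite phiD (big_morph phi phiD phi0).
Qed.

Section CoefficientCalculus.
Variable R : pzRingType.

Definition fps_const (a : R) : fps R := fun k => if k == 0%N then a else 0.

Lemma fps_mul_coef0 (f g : fps R) : fps_mul f g 0%N = f 0%N * g 0%N.
Proof. by rewrite /fps_mul big_ord1. Qed.

Lemma fps_sum_coef (n : nat) (u : 'I_n -> fps R) (k : nat) :
  (\big[@fps_add R/fps_zero R]_(i < n) u i) k = \sum_(i < n) u i k.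
Proof. exact: (big_morph (fun f : fps R => f k)). Qed.

Lemma fps_mul_constl (a : R) (g : fps R) :
  fps_mul (fps_const a) g = fun k => a * g k.
Proof.
apply: functional_extensionality => k.
rewrite /fps_mul big_ord_recl subn0 big1 ?addr0 // => i _.
by rewrite /fps_const mul0r.
Qed.

End CoefficientCalculus.

Lemma fps_mulC (R : comPzRingType) (f g : fps R) : fps_mul f g = fps_mul g f.
Proof.
apply: functional_extensionality => k; rewrite /fps_mul.
rewrite (reindex_inj rev_ord_inj); apply: eq_bigr => i _.
have -> : (rev_ord i : nat) = (k - i)%N by rewrite [LHS]subSS.
by rewrite subKn 1?mulrC // -ltnS.
Qed.

Section RightInverse.
Variables (R : pzRingType) (f : fps R) (b : R).

(* inv_upto m holds the coefficients of degree <= m of the inverse (and is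
   meaningless beyond degree m): degree m+1 is obtained from the lower ones. *)
Fixpoint inv_upto (m : nat) : nat -> R :=
  match m with
  | 0%N => fun k => if k == 0%N then b else 0
  | m'.+1 => fun k =>
      if k == m'.+1 then - b * \sum_(i < m'.+1) f i.+1 * inv_upto m' (m' - i)%N
      else inv_upto m' k
  end.

Lemma inv_upto_stable (m k : nat) : (k <= m)%N -> inv_upto m k = inv_upto k k.
Proof.
move=> km; rewrite -(subnK km) addnC; elim: (m - k)%N => [|d IH].
  by rewrite addn0.
by rewrite addnS /= ifN_eq // -addnS; lia.
Qed.

Definition fps_rinv : fps R := fun k => inv_upto k k.

Lemma fps_rinv_rec (m : nat) :
  fps_rinv m.+1 = - b * \sum_(i < m.+1) f i.+1 * fps_rinv (m - i)%N.
Proof.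
rewrite /fps_rinv /= eqxx; congr (_ * _); apply: eq_bigr => i _.
by rewrite inv_upto_stable // leq_subr.
Qed.

Lemma fps_rinvP : f 0%N * b = 1 -> fps_mul f fps_rinv = fps_one R.
Proof.
move=> fb; apply: functional_extensionality => -[|m].
  by rewrite fps_mul_coef0 /fps_rinv /= fb.
rewrite /fps_mul big_ord_recl subn0 fps_rinv_rec mulrA mulrN fb mulN1r.
by rewrite addNr.
Qed.

End RightInverse.

Lemma fps_unit_of_coef0_unit (R : comPzRingType) (f : fps R) :
  is_unit_op (@GRing.mul R) 1 (f 0%N) -> is_unit_op (@fps_mul R) (fps_one R) f.
Proof.
case=> b [fb _]; exists (fps_rinv f b).
have fg := fps_rinvP fb.
by split; last rewrite fps_mulC.
Qed.

Lemma fps_nsc_lift (R : comPzRingType) (n : nat) (i0 : 'I_n) (f : fps R) :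
  nsc_elt_op +%R *%R 0 1 n (f 0%N) ->
  nsc_elt_op (@fps_add R) (@fps_mul R) (fps_zero R) (fps_one R) n f.
Proof.
case=> e [u [ee uU _ f0E]].
pose U i : fps R :=
  fun k => if k == 0%N then u i else if i == i0 then f k else 0.
exists (fps_const e), U; split => [||i|].
- rewrite fps_mul_constl; apply: functional_extensionality => k.
  by rewrite /fps_const; case: eqP; rewrite ?ee ?mulr0.
- by move=> i; apply: fps_unit_of_coef0_unit; apply: uU.
- exact: fps_mulC.
- apply: functional_extensionality => k; rewrite /fps_add fps_sum_coef.
  rewrite /fps_const /U; case: eqP => [-> // | _].
  by rewrite add0r -big_mkcond big_pred1_eq.
Qed.

Theorem proposition1p5 (R : comPzRingType) (n : nat) (hn : (0 < n)%N) :
  fps_n_strongly_clean R n <-> n_strongly_clean R n.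
Proof.
split=> [cleanFps | cleanR f].
- (* the constant term is a unital ring morphism onto R, split by fps_const *)
  have coef0D : {morph (fun f : fps R => f 0%N) : f g / fps_add f g >-> f + g}.
    by [].
  have coef0M : {morph (fun f : fps R => f 0%N) : f g / fps_mul f g >-> f * g}.
    exact: fps_mul_coef0.
  have coef00 : fps_zero R 0%N = 0 by [].
  have coef01 : fps_one R 0%N = 1 by [].
  have constK : cancel (@fps_const R) (fun f => f 0%N) by [].
  exact: (nsc_ring_op_image coef0D coef0M coef00 coef01 constK cleanFps).
- exact: (fps_nsc_lift (Ordinal hn) (cleanR (f 0%N))).
Qed.
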